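(* Let $t,u$ be indeterminates. For every integer $n\ge1$, $$\sum_{|\lambda|=n} t^{2n(\lambda)-2\binom{\ell(\lambda)}{2}}\,\frac{(t;t)_{\ell(\lambda)-1}\,(u^{-1};t)_{\ell(\lambda)}}{\prod_{i\ge1}(t;t)_{m_i(\lambda)}}\,u^{\ell(\lambda)}=\frac{u^n-1}{1-t^n},$$ the sum being over all partitions $\lambda$ of $n$.
   Context: For a partition $\lambda$: $|\lambda|=\sum_i\lambda_i$, $\ell(\lambda)$ is the number of nonzero parts, $n(\lambda)=\sum_{i\ge1}(i-1)\lambda_i$, and $m_j(\lambda)=\#\{i:\lambda_i=j\}$. $(x;t)_m=\prod_{i=1}^m(1-xt^{i-1})$ with $(x;t)_0=1$. *)

From HB Require Import structures.
From mathcomp Require Import all_boot all_order all_algebra.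
Set Implicit Arguments. Unset Strict Implicit. Unset Printing Implicit Defensive.
Import GRing.Theory.
Local Open Scope ring_scope.

Definition is_partition (s : seq nat) : bool :=
  sorted geq s && all (fun x => 0 < x)%N s.

(* The partitions of n, enumerated as the zero-stripped versions of the
   weakly decreasing n-tuples with entries in {0..n} summing to n
   (a partition of n has at most n parts, each at most n). *)
Definition partitions (n : nat) : seq (seq nat) :=
  [seq [seq x <- map val (tval s) | (0 < x)%N]
  | s : n.-tuple 'I_n.+1 <- enum [pred s : n.-tuple 'I_n.+1 |
        sorted geq (map val (tval s)) && (sumn (map val (tval s)) == n)]].

Definition psize (la : seq nat) : nat := sumn la.
Definition plength (la : seq nat) : nat := size la.
Definition nstat (la : seq nat) : nat := (\sum_(i < size la) i * nth 0 la i)%N.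
Definition mult (j : nat) (la : seq nat) : nat := count_mem j la.

Definition qpoch (R : ringType) (x t : R) (m : nat) : R :=
  \prod_(i < m) (1 - x * t ^+ i).

From HB Require Import structures.
From mathcomp Require Import all_boot all_order all_algebra.
From mathcomp Require Import zify ring.
Import GRing.Theory.
Set Implicit Arguments. Unset Strict Implicit. Unset Printing Implicit Defensive.

(* Let W(la) = t^(2n(la) - 2C(l(la),2)) (t;t)_l(la) / prod_i (t;t)_(m_i(la)).
   Removing the first column of a partition la of n of length l with k parts
   equal to 1 leaves a partition nu of n - l of length l - k, and
   W(la) = [l choose k]_t t^(2C(l-k,2)) W(nu).  Together with the q-Vandermonde
   identity, this recursion shows that the sum of W over the partitions of n of
   length l is the Gaussian binomial [n-1 choose l-1]_t.  Since
   (t;t)_(l-1)/(t;t)_l [n-1 choose l-1]_t = [n choose l]_t/(1-t^n) and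
   (u^-1;t)_l u^l = (u-1)(u-t)...(u-t^(l-1)), the identity reduces to the
   q-binomial theorem u^n = sum_l [n choose l]_t (u-1)(u-t)...(u-t^(l-1)). *)

Lemma leq_mem_sumn (s : seq nat) x : x \in s -> x <= sumn s.
Proof.
elim: s => //= y s IH; rewrite in_cons => /orP[/eqP->|/IH h]; first exact: leq_addr.
exact: leq_trans h (leq_addl _ _).
Qed.

Lemma size_leq_sumn (s : seq nat) : all (fun x => 0 < x) s -> size s <= sumn s.
Proof. elim: s => //= x s IH /andP[hx /IH]; lia. Qed.

Lemma sumn_filter_gt0 (s : seq nat) : sumn [seq x <- s | 0 < x] = sumn s.
Proof. by elim: s => //= x s IH; case: x => //= x; rewrite IH. Qed.

Lemma sorted_geq_nseq k x : sorted geq (nseq k x).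
Proof. by case: k => //= k; elim: k => //= k ->; rewrite andbT. Qed.

Lemma sorted_geq_cat c (s1 s2 : seq nat) : sorted geq s1 -> sorted geq s2 ->
  all (fun x => c <= x) s1 -> all (fun x => x <= c) s2 -> sorted geq (s1 ++ s2).
Proof.
case: s1 => [|x s1] h1 h2 ha hb //=.
rewrite cat_path; move: h1 => /= -> /=.
case: s2 h2 hb => [|y s2] h2 hb //=.
move: h2 => /= ->; rewrite andbT.
move/allP: ha => /(_ _ (mem_last x s1)) h.
move: hb => /andP[hy _]; exact: leq_trans hy h.
Qed.

Lemma sorted_geq_filter_nseq c (s : seq nat) : sorted geq s ->
  all (fun x => c <= x) s -> s = [seq x <- s | c < x] ++ nseq (count_mem c s) c.
Proof.
elim: s => //= x s IH hp /andP[hx ha].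
have hmin := order_path_min (rev_trans leq_trans) hp.
rewrite {1}(IH (path_sorted hp) ha).
have [hcx|->] : c < x \/ c = x by lia.
  by rewrite hcx /=; have /negPf -> : x != c by rewrite neq_ltn hcx orbT.
have -> : [seq y <- s | x < y] = [::].
  rewrite (@eq_in_filter _ _ pred0) ?filter_pred0 // => y hy.
  by move/allP: hmin => /(_ _ hy) /= hyx; rewrite ltnNge hyx.
by rewrite ltnn eqxx.
Qed.

Lemma mem_partitions n la :
  (la \in partitions n) = is_partition la && (sumn la == n).
Proof.
apply/mapP/idP.
  case=> s; rewrite mem_enum => /andP[srt /eqP sm] ->.
  rewrite /is_partition filter_all sumn_filter_gt0 sm eqxx !andbT.
  exact: sorted_filter (rev_trans leq_trans) _ _ srt.
move=> /andP[/andP[srt pos] /eqP sm].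
have hsz : size la <= n by rewrite -sm; exact: size_leq_sumn.
set l0 := la ++ nseq (n - size la) 0.
have hl0 : all (fun x => x < n.+1) l0.
  rewrite all_cat; apply/andP; split; last by apply/allP => x /nseqP[-> _].
  by apply/allP => x hx; rewrite ltnS -sm; exact: leq_mem_sumn.
have szl0 : size (map (@inord n) l0) == n.
  by rewrite size_map size_cat size_nseq subnKC.
have hval : map val (map (@inord n) l0) = l0.
  rewrite -map_comp -[RHS]map_id; apply/eq_in_map => x hx /=.
  by rewrite inordK //; move/allP: hl0; apply.
exists (Tuple szl0).
  rewrite mem_enum inE /= hval sumn_cat sumn_nseq mul0n addn0 sm eqxx andbT.
  apply: (@sorted_geq_cat 1) => //; first exact: sorted_geq_nseq.
  by apply/allP => x /nseqP[-> _].
rewrite /= hval filter_cat (@eq_in_filter _ _ predT) ?filter_predT; last first.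
  by move=> x hx; move/allP: pos; apply.
by rewrite (@eq_in_filter _ _ pred0) ?filter_pred0 ?cats0 // => x /nseqP[-> _].
Qed.

Lemma uniq_partitions n : uniq (partitions n).
Proof.
rewrite map_inj_in_uniq ?enum_uniq // => s1 s2.
rewrite !mem_enum => /andP[srt1 _] /andP[srt2 _] eq_pos.
apply: val_inj; apply: (inj_map val_inj).
have ge0 (s : seq nat) : all (fun x => 0 <= x) s by apply/allP.
have e1 := sorted_geq_filter_nseq srt1 (ge0 _).
have e2 := sorted_geq_filter_nseq srt2 (ge0 _).
have hsize : size (map val (tval s1)) = size (map val (tval s2)).
  by rewrite !size_map !size_tuple.
rewrite e1 e2 eq_pos !size_cat !size_nseq in hsize *.
by move/addnI: hsize => ->.
Qed.

Lemma nstat_nil : nstat [::] = 0.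
Proof. by rewrite /nstat big_ord0. Qed.

Lemma nstat_cons x s : nstat (x :: s) = sumn s + nstat s.
Proof.
have sumn_nth (r : seq nat) : \sum_(i < size r) nth 0 r i = sumn r.
  by elim: r => [|y r IH]; rewrite ?big_ord0 // big_ord_recl /= IH.
rewrite /nstat /= big_ord_recl mul0n add0n -sumn_nth -big_split /=.
by apply: eq_bigr => i _; rewrite mulSn.
Qed.

Lemma binS2 k : 'C(k.+1, 2) = 'C(k, 2) + k.
Proof. by rewrite binS bin1. Qed.

Lemma mul2bin2 k : 2 * 'C(k, 2) = k * (k - 1).
Proof. elim: k => // k IH; rewrite binS2 mulnDr IH; nia. Qed.

Lemma bin2_size_leq_nstat (s : seq nat) :
  all (fun x => 0 < x) s -> 'C(size s, 2) <= nstat s.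
Proof.
elim: s => [|x s IH] /=; first by rewrite nstat_nil.
move=> /andP[_ h]; rewrite nstat_cons binS2.
have := size_leq_sumn h; have := IH h; lia.
Qed.

(* [add_column k nu] prepends to the Young diagram of [nu] a first column of
   height [size nu + k]; [remove_column] is its inverse on partitions. *)
Definition add_column (k : nat) (nu : seq nat) := map succn nu ++ nseq k 1.

Definition remove_column (la : seq nat) := map predn [seq x <- la | 1 < x].

Lemma size_add_column k nu : size (add_column k nu) = size nu + k.
Proof. by rewrite /add_column size_cat size_map size_nseq. Qed.

Lemma sumn_add_column k nu : sumn (add_column k nu) = sumn nu + size nu + k.
Proof.
rewrite /add_column sumn_cat sumn_nseq mul1n; congr (_ + _).
by elim: nu => //= x nu ->; rewrite addSn addnS addnA.
Qed.

Lemma nstat_add_column k nu :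
  nstat (add_column k nu) = nstat nu + 'C(size nu + k, 2).
Proof.
elim: nu => [|x nu IH].
  rewrite nstat_nil /add_column /=; elim: k => [|k IH]; first by rewrite nstat_nil.
  by rewrite /= nstat_cons IH sumn_nseq mul1n binS2 addnC.
change (nstat (x.+1 :: add_column k nu) = nstat (x :: nu) + 'C((size nu).+1 + k, 2)).
rewrite !nstat_cons IH sumn_add_column addSn binS2; lia.
Qed.

Lemma count1_add_column k nu :
  all (fun x => 0 < x) nu -> count_mem 1 (add_column k nu) = k.
Proof.
move=> pos; rewrite /add_column count_cat count_nseq /= mul1n.
suff -> : count_mem 1 (map succn nu) = 0 by [].
by elim: nu pos => //= x nu IH /andP[hx /IH ->]; case: x hx.
Qed.

Lemma countSS_add_column k nu i :
  count_mem i.+2 (add_column k nu) = count_mem i.+1 nu.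
Proof.
rewrite /add_column count_cat count_nseq /= mul0n addn0.
by elim: nu => //= x nu ->.
Qed.

Lemma is_partition_add_column k nu :
  is_partition nu -> is_partition (add_column k nu).
Proof.
move=> /andP[srt pos]; apply/andP; split.
  apply: (@sorted_geq_cat 1); last by apply/allP => x /nseqP[-> _].
  - by rewrite sorted_map; apply: sub_sorted srt => a b /=; rewrite ltnS.
  - exact: sorted_geq_nseq.
  - by rewrite all_map; apply: sub_all pos => x /=.
rewrite all_cat all_map; apply/andP; split; first by apply/allP.
by apply/allP => x /nseqP[-> _].
Qed.

Lemma is_partition_remove_column la :
  is_partition la -> is_partition (remove_column la).
Proof.
move=> /andP[srt pos]; apply/andP; split.
  rewrite sorted_map; apply: (@sub_sorted _ geq); first by move=> a b /=; lia.
  exact: sorted_filter (rev_trans leq_trans) _ _ srt.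
by rewrite all_map; apply/allP => x; rewrite mem_filter /= => /andP[h _]; lia.
Qed.

Lemma remove_columnK la :
  is_partition la -> add_column (count_mem 1 la) (remove_column la) = la.
Proof.
move=> /andP[srt pos]; rewrite [RHS](sorted_geq_filter_nseq srt pos).
rewrite /add_column /remove_column -map_comp; congr (_ ++ _).
rewrite -[RHS]map_id; apply/eq_in_map => x.
by rewrite mem_filter /= => /andP[h _]; case: x h.
Qed.

Lemma add_column_inj k : injective (add_column k).
Proof.
move=> a b e.
have hs : size a = size b by move: (congr1 size e); rewrite !size_add_column => /addIn.
move: e => /eqP; rewrite /add_column eqseq_cat ?size_map // => /andP[/eqP e _].
exact: inj_map succn_inj _ _ e.
Qed.

Lemma perm_partitions_add_column n l k : k <= l <= n ->
  perm_eq [seq la <- partitions n | (size la == l) && (count_mem 1 la == k)]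
          (map (add_column k) [seq nu <- partitions (n - l) | size nu == l - k]).
Proof.
move=> /andP[hkl hln]; apply: uniq_perm.
- by rewrite filter_uniq ?uniq_partitions.
- by rewrite map_inj_uniq ?filter_uniq ?uniq_partitions //; exact: add_column_inj.
move=> la; rewrite mem_filter mem_partitions; apply/idP/mapP.
  move=> /andP[/andP[/eqP hs /eqP hc] /andP[hp /eqP hsum]].
  exists (remove_column la); last by rewrite -hc remove_columnK.
  have e := remove_columnK hp; rewrite hc in e.
  rewrite mem_filter mem_partitions is_partition_remove_column //=.
  have := congr1 size e; rewrite size_add_column hs => hs'.
  have := congr1 sumn e; rewrite sumn_add_column hsum => hsum'.
  by apply/andP; split; apply/eqP; lia.
case=> nu; rewrite mem_filter mem_partitions => /andP[/eqP hs /andP[hp /eqP hsum]] ->.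
rewrite is_partition_add_column //= size_add_column sumn_add_column.
rewrite count1_add_column; last by case/andP: hp.
by rewrite hs hsum eqxx !andbT; apply/andP; split; apply/eqP; lia.
Qed.

Local Open Scope ring_scope.

Lemma sum_partition_nat (R : nmodType) (I : eqType) (s : seq I) (F : I -> R)
    (f : I -> nat) M :
  (forall x, x \in s -> (f x < M)%N) ->
  \sum_(x <- s) F x = \sum_(k < M) \sum_(x <- s | f x == k) F x.
Proof.
move=> hM.
transitivity (\sum_(x <- s) \sum_(k < M | k == f x :> nat) F x).
  rewrite big_seq [RHS]big_seq; apply: eq_bigr => x hx.
  by rewrite (big_ord1_eq _ (fun=> F x) (f x) M) hM.
under eq_bigr do rewrite big_mkcond.
rewrite exchange_big; apply: eq_bigr => k _; rewrite [RHS]big_mkcond.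
by apply: eq_bigr => x _; rewrite eq_sym.
Qed.

Section GaussianBinomial.
Variables (R : comNzRingType) (t : R).

Fixpoint qbin (n k : nat) : R :=
  match n, k with
  | _, 0 => 1
  | 0, _.+1 => 0
  | n'.+1, k'.+1 => qbin n' k' + t ^+ k'.+1 * qbin n' k'.+1
  end.

Arguments qbin : simpl never.

Lemma qbin0 n : qbin n 0 = 1. Proof. by case: n. Qed.

Lemma qbinS n k : qbin n.+1 k.+1 = qbin n k + t ^+ k.+1 * qbin n k.+1.
Proof. by []. Qed.

Lemma qbin_small n k : (n < k)%N -> qbin n k = 0.
Proof.
elim: n k => [|n IH] [|k] //= hk.
by rewrite qbinS !IH ?mulr0 ?addr0 // ltnW.
Qed.

Lemma qbinn n : qbin n n = 1.
Proof. by elim: n => [|n IH]; rewrite ?qbin0 // qbinS IH qbin_small // mulr0 addr0. Qed.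

Lemma qpoch0 (x : R) : qpoch x t 0 = 1.
Proof. by rewrite /qpoch big_ord0. Qed.

Lemma qpochS (x : R) m : qpoch x t m.+1 = qpoch x t m * (1 - x * t ^+ m).
Proof. by rewrite /qpoch big_ord_recr. Qed.

Lemma qpochtS m : qpoch t t m.+1 = qpoch t t m * (1 - t ^+ m.+1).
Proof. by rewrite qpochS exprS. Qed.

Lemma qbin_qpoch n k : (k <= n)%N ->
  qbin n k * qpoch t t k * qpoch t t (n - k) = qpoch t t n.
Proof.
elim: n k => [|n IH] [|k] //= hk.
- by rewrite qbin0 !qpoch0 !mulr1.
- by rewrite qbin0 subn0 qpoch0 !mul1r.
rewrite qbinS subSS; have [hlt|<-] : (k < n)%N \/ k = n by lia.
  have E1 := IH k (ltnW hlt); have E2 := IH k.+1 hlt.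
  have hnk : (n - k = (n - k.+1).+1)%N by lia.
  rewrite hnk !qpochtS in E1 E2 *.
  have -> : t ^+ n.+1 = t ^+ k.+1 * t ^+ (n - k.+1).+1.
    by rewrite -exprD; congr (_ ^+ _); lia.
  transitivity (qpoch t t n * (1 - t ^+ k.+1)
                + t ^+ k.+1 * (qpoch t t n * (1 - t ^+ (n - k.+1).+1))).
    by rewrite -{1}E1 -E2; ring.
  ring.
by rewrite subnn (@qbin_small k k.+1) // mulr0 addr0 qbinn qpoch0 mulr1 mul1r.
Qed.

Definition qfalling (u : R) (l : nat) := \prod_(i < l) (u - t ^+ i).

Lemma qfalling0 u : qfalling u 0 = 1.
Proof. by rewrite /qfalling big_ord0. Qed.

Lemma qfallingS u l : qfalling u l.+1 = qfalling u l * (u - t ^+ l).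
Proof. by rewrite /qfalling big_ord_recr. Qed.

Lemma exprn_qbin (u : R) n : u ^+ n = \sum_(l < n.+1) qbin n l * qfalling u l.
Proof.
elim: n => [|n IH]; first by rewrite big_ord1 qfalling0 qbin0 mulr1 expr0.
rewrite exprS IH mulr_sumr.
have u_qfalling l : u * qfalling u l = qfalling u l.+1 + t ^+ l * qfalling u l.
  by rewrite qfallingS; ring.
under eq_bigr do rewrite mulrCA u_qfalling mulrDr.
rewrite big_split [RHS]big_ord_recl qbin0.
under [X in _ = _ + X]eq_bigr do rewrite lift0 qbinS mulrDl.
rewrite big_split addrCA; congr (_ + _).
rewrite [X in _ = _ + X](big_ord_recr n) /= (@qbin_small n n.+1) // mulr0 mul0r addr0.
rewrite big_ord_recl expr0 mul1r qbin0 mul1r; congr (_ + _).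
by apply: eq_bigr => i _; rewrite lift0 mulrCA mulrA.
Qed.

Lemma qbin_vandermonde a b c : qbin (a + b) c =
  \sum_(j < c.+1) qbin a j * qbin b (c - j) * t ^+ ((a - j) * (c - j)).
Proof.
elim: a c => [|a IH] c.
  rewrite big_ord_recl /= qbin0 subn0 mul0n expr0 mulr1 mul1r big1 ?addr0 //.
  by move=> i _; rewrite /= mul0r mul0r.
case: c => [|c]; first by rewrite big_ord1 /= !qbin0 muln0 expr0 !mulr1.
rewrite addSn qbinS !IH [RHS]big_ord_recl /= qbin0 mul1r !subn0.
under [X in _ = _ + X]eq_bigr do
  rewrite ?lift0 /bump /= ?add1n qbinS !subSS mulrDl mulrDl.
rewrite big_split /= addrCA; congr (_ + _).
rewrite mulr_sumr big_ord_recl /= qbin0 !subn0 mul1r; congr (_ + _).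
  by rewrite mulrCA -exprD; congr (_ * _ ^+ _); lia.
apply: eq_bigr => i _; rewrite ?lift0 /bump /= ?add1n !subSS.
have [hi|hi] := leqP i.+1 a; last by rewrite (@qbin_small a i.+1) // !(mulr0, mul0r).
have hic : (i < c.+1)%N := ltn_ord i.
have -> : t ^+ ((a - i) * (c - i)) = t ^+ (c - i) * t ^+ ((a - i.+1) * (c - i)).
  by rewrite -exprD; congr (_ ^+ _); have -> : (a - i = (a - i.+1).+1)%N by lia.
have -> : t ^+ c.+1 = t ^+ i.+1 * t ^+ (c - i) by rewrite -exprD; congr (_ ^+ _); lia.
ring.
Qed.

(* [n-1 choose l-1]_t, the t-count of compositions of [n] into [l] parts;
   for [l = 0] only the empty composition of 0 counts. *)
Definition qbin_comp (l n : nat) : R :=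
  if l == 0%N then (n == 0%N)%:R else if n == 0%N then 0 else qbin n.-1 l.-1.

Lemma qbin_comp_small l n : (n < l)%N -> qbin_comp l n = 0.
Proof.
rewrite /qbin_comp; case: l => // l; case: n => //= n hn.
exact: qbin_small.
Qed.

Lemma qbin_comp_rec l n : (1 <= l <= n)%N ->
  qbin_comp l n =
    \sum_(k < l.+1) qbin l k * t ^+ (2 * 'C(l - k, 2)) * qbin_comp (l - k) (n - l).
Proof.
case: l => // l /andP[_ hln].
under eq_bigr do rewrite mul2bin2.
rewrite big_ord_recr /= subnn qbinn /qbin_comp /= mul1r.
have /negPf -> : n != 0%N by rewrite -lt0n; apply: leq_trans hln.
case: eqP => [n_le|n_gt].
  have -> : n = l.+1 by lia.
  rewrite qbinn mulr1 big1 ?add0r // => k _ /=.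
  have /negPf -> : (l.+1 - k != 0)%N by rewrite subn_eq0 -ltnNge ltn_ord.
  by rewrite mulr0.
rewrite mulr0 addr0.
have := qbin_vandermonde l.+1 (n - l.+1).-1 l.
have -> : (l.+1 + (n - l.+1).-1 = n.-1)%N by lia.
move=> ->; apply: eq_bigr => k _.
have hk : (k < l.+1)%N := ltn_ord k.
have /negPf -> : (l.+1 - k != 0)%N by rewrite subn_eq0 -ltnNge.
rewrite -mulrA [qbin (n - l.+1).-1 _ * _]mulrC mulrA.
by congr (_ * _ ^+ _ * qbin _ _); lia.
Qed.

End GaussianBinomial.

Arguments qbin : simpl never.

Section PartitionWeights.
Variables (K : fieldType) (t : K) (N : nat).
Hypothesis t_pow_neq1 : forall k : nat, (1 <= k <= N)%N -> t ^+ k != 1.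

Lemma qpoch_neq0 m : (m <= N)%N -> qpoch t t m != 0.
Proof.
move=> hm; rewrite /qpoch prodf_seq_neq0; apply/allP => i _ /=.
rewrite -exprS subr_eq0 eq_sym t_pow_neq1 //; have := ltn_ord i; lia.
Qed.

Lemma qpoch_ratio_qbin l k : (k <= l <= N)%N ->
  qpoch t t l / (qpoch t t k * qpoch t t (l - k)) = qbin t l k.
Proof.
move=> /andP[hk hl]; rewrite -(qbin_qpoch t hk).
have h1 : qpoch t t k != 0 by apply: qpoch_neq0; lia.
have h2 : qpoch t t (l - k) != 0 by apply: qpoch_neq0; lia.
by field; rewrite h1 h2.
Qed.

Definition mult_qpoch (M : nat) (la : seq nat) :=
  \prod_(1 <= i < M) qpoch t t (mult i la).

Lemma mult_qpoch_neq0 M la : (size la <= N)%N -> mult_qpoch M la != 0.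
Proof.
move=> hs; rewrite /mult_qpoch prodf_seq_neq0; apply/allP => i _ /=.
by apply: qpoch_neq0; apply: leq_trans hs; exact: count_size.
Qed.

Lemma mult_qpoch_widen M M' la : (1 <= M <= M')%N ->
  all (fun x => x < M)%N la -> mult_qpoch M' la = mult_qpoch M la.
Proof.
move=> /andP[h1 h2] ha; rewrite /mult_qpoch (big_cat_nat h1 h2) /=.
rewrite [X in _ * X]big_nat_cond [X in _ * X]big1 ?mulr1 // => i /andP[/andP[hi _] _].
rewrite /mult; have /count_memPn -> : i \notin la.
  by apply/negP => /(allP ha) /=; rewrite ltnNge hi.
by rewrite qpoch0.
Qed.

Lemma mult_qpoch_add_column M k nu : (1 <= M)%N -> all (fun x => 0 < x)%N nu ->
  mult_qpoch M.+1 (add_column k nu) = qpoch t t k * mult_qpoch M nu.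
Proof.
move=> hM pos; rewrite /mult_qpoch big_nat_recl // /mult count1_add_column //.
congr (_ * _); apply: eq_big_nat => i /andP[hi _]; case: i hi => // i _.
by rewrite countSS_add_column.
Qed.

Definition pweight (la : seq nat) :=
  t ^+ (2 * nstat la - 2 * 'C(size la, 2))
  * (qpoch t t (size la) / mult_qpoch (sumn la).+1 la).

Lemma pweight_nil : pweight [::] = 1.
Proof. by rewrite /pweight nstat_nil /mult_qpoch big_geq // qpoch0 divr1 mulr1. Qed.

Lemma pweight_add_column k nu : is_partition nu -> (1 <= size nu + k <= N)%N ->
  pweight (add_column k nu) =
    qbin t (size nu + k) k * t ^+ (2 * 'C(size nu, 2)) * pweight nu.
Proof.
move=> hp /andP[h1 h2]; have /andP[_ pos] := hp.
rewrite /pweight size_add_column sumn_add_column nstat_add_column.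
rewrite -(@mult_qpoch_widen (sumn nu + size nu + k).+1 (sumn nu + size nu + k).+2); last first.
- by apply/allP => x hx; rewrite ltnS -sumn_add_column; exact: leq_mem_sumn.
- by rewrite !ltnS leqnSn.
rewrite mult_qpoch_add_column // (@mult_qpoch_widen (sumn nu).+1); last first.
- by apply/allP => x hx; rewrite ltnS; exact: leq_mem_sumn.
- lia.
rewrite -(@qpoch_ratio_qbin (size nu + k) k) ?leq_addl //= addnK.
have hge := bin2_size_leq_nstat pos.
have -> : (2 * (nstat nu + 'C(size nu + k, 2)) - 2 * 'C(size nu + k, 2) =
           2 * 'C(size nu, 2) + (2 * nstat nu - 2 * 'C(size nu, 2)))%N by lia.
have hq : qpoch t t (size nu) != 0 by apply: qpoch_neq0; lia.
have hk : qpoch t t k != 0 by apply: qpoch_neq0; lia.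
have hD : mult_qpoch (sumn nu).+1 nu != 0 by apply: mult_qpoch_neq0; lia.
by rewrite exprD; field; rewrite hq hk hD.
Qed.

Definition len_weight_sum (l n : nat) :=
  \sum_(la <- partitions n | size la == l) pweight la.

Lemma len_weight_sum0 n : len_weight_sum 0 n = (n == 0%N)%:R.
Proof.
rewrite /len_weight_sum -big_filter; case: eqP => [->|hn].
  rewrite (@perm_big _ _ _ _ _ [:: [::]]) ?big_seq1 ?pweight_nil //.
  apply: uniq_perm => //; first by rewrite filter_uniq ?uniq_partitions.
  by move=> la; rewrite mem_filter mem_partitions inE; case: la.
rewrite big_filter big1_seq // => la /andP[/eqP hs]; rewrite mem_partitions.
by case: la hs => // _ /andP[_ /eqP h]; case: hn.
Qed.

Lemma len_weight_sum_small l n : (n < l)%N -> len_weight_sum l n = 0.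
Proof.
move=> hl; rewrite /len_weight_sum big1_seq // => la /andP[/eqP hs].
rewrite mem_partitions => /andP[/andP[_ pos] /eqP hsum].
by have := size_leq_sumn pos; lia.
Qed.

Lemma len_weight_sum_rec l n : (1 <= l <= n)%N -> (n <= N)%N ->
  len_weight_sum l n = \sum_(k < l.+1)
    qbin t l k * t ^+ (2 * 'C(l - k, 2)) * len_weight_sum (l - k) (n - l).
Proof.
move=> /andP[h1 h2] hN; rewrite /len_weight_sum -big_filter.
rewrite (@sum_partition_nat _ _ _ _ (count_mem 1) l.+1); last first.
  by move=> la; rewrite mem_filter ltnS => /andP[/eqP <- _]; exact: count_size.
apply: eq_bigr => k _; have hk : (k <= l)%N by rewrite -ltnS.
rewrite big_filter_cond -big_filter.
rewrite (perm_big _ (@perm_partitions_add_column n l k _)); last by rewrite hk.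
rewrite big_map big_filter mulr_sumr big_seq_cond [RHS]big_seq_cond.
apply: eq_bigr => nu /andP[hnu /eqP hs].
have hp : is_partition nu by move: hnu; rewrite mem_partitions => /andP[].
by rewrite pweight_add_column ?hs ?subnK // h1 (leq_trans h2 hN).
Qed.

Lemma len_weight_sumE l n : (n <= N)%N -> len_weight_sum l n = qbin_comp t l n.
Proof.
elim/ltn_ind: n l => n IH l hN.
have [->|hl] := posnP l; first by rewrite len_weight_sum0.
have [hln|hnl] := leqP l n; last by rewrite len_weight_sum_small ?qbin_comp_small.
rewrite len_weight_sum_rec ?hl ?hln // qbin_comp_rec ?hl ?hln //.
by apply: eq_bigr => k _; rewrite IH //; lia.
Qed.

Lemma qpoch_ratio_qbin_pred n l : (l < n <= N)%N ->
  qpoch t t l / qpoch t t l.+1 * qbin t n.-1 l = qbin t n l.+1 / (1 - t ^+ n).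
Proof.
case: n => // n /andP[hl hN] /=.
have hln : (l <= n <= N)%N by rewrite -ltnS hl ltnW.
have hln1 : (l.+1 <= n.+1 <= N)%N by rewrite hl.
rewrite -(qpoch_ratio_qbin hln) -(qpoch_ratio_qbin hln1) subSS !qpochtS.
have h1 : qpoch t t l != 0 by apply: qpoch_neq0; lia.
have h2 : qpoch t t (n - l) != 0 by apply: qpoch_neq0; lia.
have h3 : 1 - t ^+ l.+1 != 0 by rewrite subr_eq0 eq_sym t_pow_neq1 //; lia.
have h4 : 1 - t ^+ n.+1 != 0 by rewrite subr_eq0 eq_sym t_pow_neq1.
by field; rewrite h1 h2 h3 h4.
Qed.

Lemma qpoch_inv_expr (u : K) l : u != 0 -> qpoch u^-1 t l * u ^+ l = qfalling t u l.
Proof.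
move=> hu; elim: l => [|l IH]; first by rewrite qpoch0 qfalling0 mulr1.
rewrite qpochS qfallingS -IH exprS.
have uVu : u^-1 * u = 1 by rewrite mulVf.
transitivity (qpoch u^-1 t l * u ^+ l * (u - u^-1 * u * t ^+ l)); first ring.
by rewrite uVu mul1r.
Qed.

Lemma summand_pweight (u : K) la : u != 0 -> (size la <= N)%N ->
  t ^+ (2 * nstat la - 2 * 'C(size la, 2))
  * (qpoch t t (size la).-1 * qpoch u^-1 t (size la) / mult_qpoch (sumn la).+1 la)
  * u ^+ size la
  = qpoch t t (size la).-1 / qpoch t t (size la) * qfalling t u (size la) * pweight la.
Proof.
move=> hu hs; rewrite /pweight -qpoch_inv_expr //.
have hq : qpoch t t (size la) != 0 by exact: qpoch_neq0.
have hD : mult_qpoch (sumn la).+1 la != 0 by exact: mult_qpoch_neq0.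
by field; rewrite hq hD.
Qed.

Lemma sum_qbin_comp_qfalling (u : K) n : (0 < n <= N)%N ->
  \sum_(l < n.+1) qpoch t t l.-1 / qpoch t t l * qfalling t u l * qbin_comp t l n
  = (u ^+ n - 1) / (1 - t ^+ n).
Proof.
move=> /andP[hn hN]; have /negPf n_neq0 : n != 0%N by rewrite -lt0n.
rewrite (exprn_qbin t u n) !big_ord_recl /qbin_comp /= n_neq0 mulr0 add0r.
rewrite qbin0 qfalling0 mul1r [1 + _]addrC addrK mulr_suml; apply: eq_bigr => i _.
by rewrite /bump /= mulrAC qpoch_ratio_qbin_pred ?ltn_ord // mulrAC.
Qed.

End PartitionWeights.

Theorem mainTheorem10 (K : fieldType) (t u : K) (n : nat) :
  (1 <= n)%N -> u != 0 -> (forall k : nat, (1 <= k <= n)%N -> t ^+ k != 1) ->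
  \sum_(la <- partitions n)
     t ^+ (2 * nstat la - 2 * 'C(plength la, 2))%N
     * (qpoch t t (plength la).-1 * qpoch u^-1 t (plength la)
        / \prod_(1 <= i < (psize la).+1) qpoch t t (mult i la))
     * u ^+ plength la
  = (u ^+ n - 1) / (1 - t ^+ n).
Proof.
move=> hn hu ht.
have size_leq la : la \in partitions n -> (size la <= n)%N.
  by rewrite mem_partitions => /andP[/andP[_ pos] /eqP <-]; exact: size_leq_sumn.
under eq_big_seq => la /size_leq hs do rewrite (summand_pweight ht hu hs).
rewrite (@sum_partition_nat _ _ _ _ size n.+1); last exact: size_leq.
rewrite -(sum_qbin_comp_qfalling ht) ?hn ?leqnn //; apply: eq_bigr => l _.
rewrite -(len_weight_sumE ht) // mulr_sumr.
by apply: eq_bigr => la /eqP ->.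
Qed.
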